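(* Let $\mathbf{k}$ be a field, $p\ge3$ an integer, $S=\mathbf{k}[e_1,\dots,e_{2p}]$, and let $\mathcal{F}$ be the total complex defined below. Then $H_i(\mathcal{F})=0$ for all $i\neq0$.
   Context: Let $V=\operatorname{span}_{\mathbf{k}}(e_1,\dots,e_{p-1})$ and $W=\operatorname{span}_{\mathbf{k}}(e_{p+1},\dots,e_{2p-1})$ inside $S_1$. For $U\in\{V,W\}$, the Koszul differential $\partial^U:S\otimes_{\mathbf{k}}\bigwedge^kU\to S\otimes_{\mathbf{k}}\bigwedge^{k-1}U$ is $s\otimes u_1\wedge\cdots\wedge u_k\mapsto\sum_{l=1}^k(-1)^lsu_l\otimes u_1\wedge\cdots\widehat{u_l}\cdots\wedge u_k$. For $a,b\ge0$ let $C_{a,b}=S\otimes\bigwedge^{a+2}V\otimes\bigwedge^bW$, with horizontal maps $\partial^h=\partial^V\otimes1:C_{a,b}\to C_{a-1,b}$ (zero for $a=0$) and vertical maps $\partial^v:C_{a,b}\to C_{a,b-1}$, $s\otimes\omega\otimes w_1\wedge\cdots\wedge w_b\mapsto(-1)^a\sum_{l=1}^b(-1)^lsw_l\otimes\omega\otimes w_1\wedge\cdots\widehat{w_l}\cdots\wedge w_b$. $\mathcal{F}$ is the total complex: $\mathcal{F}_n=\bigoplus_{a+b=n}C_{a,b}$ with differential $\partial^h+\partial^v$. *)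

From HB Require Import structures.
From mathcomp Require Import all_boot all_order all_algebra.
From mathcomp Require Import zify.
From mathcomp Require Export mpoly.
Set Implicit Arguments. Unset Strict Implicit. Unset Printing Implicit Defensive.
Import Order.TTheory GRing.Theory.
Local Open Scope ring_scope.

(* Variables e_1,...,e_{2p} of S are 'X_0,...,'X_(2p-1); e_j = 'X_(j-1). *)
(* V has basis e_1..e_{p-1}: basis vector i : 'I_(p-1) is e_{i+1} = 'X_i.  *)
(* W has basis e_{p+1}..e_{2p-1}: basis vector j : 'I_(p-1) is e_{p+1+j} = 'X_(p+j). *)

Lemma vidx_lt (p : nat) (i : 'I_(p.-1)) : (i < 2 * p)%N.
Proof. have := ltn_ord i; lia. Qed.

Lemma widx_lt (p : nat) (j : 'I_(p.-1)) : (p + j < 2 * p)%N.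
Proof. have := ltn_ord j; lia. Qed.

Section Complex.
Variables (k : fieldType) (p : nat).

Definition S := {mpoly k[2 * p]}.
Definition Idx := 'I_(p.-1).
(* basis index of S (x) /\^A V (x) /\^B W : the pair (A, B) of index sets,
   standing for  e_A (x) e_B  with wedge factors in increasing order. *)
Definition key := ({set Idx} * {set Idx})%type.
(* elements of the free S-module  (+)_{A,B} S (x) /\^{|A|} V (x) /\^{|B|} W *)
Definition chain := {ffun key -> S}.

Definition Xv (i : Idx) : S := 'X_(Ordinal (vidx_lt i)).
Definition Xw (j : Idx) : S := 'X_(Ordinal (widx_lt j)).

(* (-1)^l where l is the (1-based) position of i in the increasing list of A *)
Definition possign (i : Idx) (A : {set Idx}) : S :=
  (-1) ^+ #|[set m in A | (m <= i)%N]|.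

Definition single (K : key) (s : S) : chain :=
  [ffun K' => if K' == K then s else 0].

(* horizontal map on s (x) e_A (x) e_B in C_{a,b}, a = |A|-2; zero for a = 0 *)
Definition dh (A B : {set Idx}) (s : S) : chain :=
  if (2 < #|A|)%N then
    \sum_(i in A) single (A :\ i, B) (possign i A * (s * Xv i))
  else 0.

(* vertical map on s (x) e_A (x) e_B in C_{a,b}, a = |A|-2 *)
Definition dv (A B : {set Idx}) (s : S) : chain :=
  (-1) ^+ (#|A| - 2) *:
    \sum_(j in B) single (A, B :\ j) (possign j B * (s * Xw j)).

Definition dF (x : chain) : chain :=
  \sum_(K : key) (dh K.1 K.2 (x K) + dv K.1 K.2 (x K)).

(* x lies in F_n = (+)_{a+b=n, a,b>=0} C_{a,b},  C_{a,b} = S (x) /\^{a+2}V (x) /\^b W *)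
Definition inF (n : int) (x : chain) : Prop :=
  forall K : key, x K != 0 ->
    (2 <= #|K.1|)%N /\ ((#|K.1| + #|K.2|)%N%:Z = n + 2)%R.

End Complex.

(* Extend the differential of F to all pairs (A, B), including |A| < 2. Identifying
   /\^A V (x) /\^B W with /\^(A u B) (V (+) W), V before W, this is the Koszul complex
   of S on the 2(p-1) variables of V (+) W, which is contracted, away from the empty
   wedge, by moving one active variable (one in the wedge or dividing the monomial)
   from the monomial into the wedge, a variable of W whenever there is one. The
   differential of F is this Koszul differential followed by truncation to |A| >= 2.
   For a cycle x of F_i, y = h x lies in F_(i+1) and d y = x - h (d x), where d x lives
   on |A| <= 1 and, as i <> 0, on B <> 0; there h keeps A, so truncation kills h (d x)
   and the differential of F maps y to x. *)

From HB Require Import structures.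
From mathcomp Require Import all_boot all_order all_algebra.
From mathcomp Require Import mpoly ssrcomplements zify.
Set Implicit Arguments. Unset Strict Implicit. Unset Printing Implicit Defensive.
Import GRing.Theory.
Local Open Scope ring_scope.

Section MonomialExtension.
Variables (R : nzRingType) (n : nat) (M : lmodType R).
Implicit Types (f : 'X_{1..n} -> M) (s : {mpoly R[n]}).

Definition mlinext f s : M := \sum_(m <- msupp s) s@_m *: f m.

Lemma mlinextE f b s : (msize s <= b)%N ->
  mlinext f s = \sum_(m : 'X_{1..n < b}) s@_m *: f m.
Proof.
move=> le_sb; pose I : subFinType _ := 'X_{1..n < b}.
rewrite /mlinext (big_mksub I) ?msupp_uniq //=.
  by rewrite big_rmcond //= => m /memN_msupp_eq0 ->; rewrite scale0r.
by move=> m /msize_mdeg_lt /leq_trans; apply.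
Qed.

Lemma mlinext_is_linear f : linear (mlinext f).
Proof.
move=> c s t; pose b := (msize s + msize t + msize (c *: s + t))%N.
rewrite !(@mlinextE _ b) ?/b; try lia.
rewrite scaler_sumr -big_split; apply: eq_bigr => m _ /=.
by rewrite mcoeffD mcoeffZ scalerDl scalerA.
Qed.

HB.instance Definition _ f :=
  GRing.isLinear.Build R {mpoly R[n]} M _ (mlinext f) (mlinext_is_linear f).

Lemma mlinextX f m : mlinext f 'X_[m] = f m.
Proof. by rewrite /mlinext msuppX big_seq1 mcoeffX eqxx scale1r. Qed.

Lemma rpred_mlinext (X : submodClosed M) f s : (forall m, f m \in X) -> mlinext f s \in X.
Proof. by move=> fX; apply: rpred_sum => m _; apply: rpredZ. Qed.

End MonomialExtension.

Section FiniteSupport.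
Variables (R : nzRingType) (T : finType) (M : lmodType R).
Implicit Types (P Q : pred T) (z : {ffun T -> M}).

Definition fdelta (t : T) (v : M) : {ffun T -> M} :=
  [ffun t' => if t' == t then v else 0].

Lemma fdelta_is_linear t : linear (fdelta t).
Proof.
by move=> c u v; apply/ffunP => t'; rewrite !ffunE; case: eqP; rewrite ?scaler0 ?addr0.
Qed.

HB.instance Definition _ t :=
  GRing.isLinear.Build R M {ffun T -> M} _ (fdelta t) (fdelta_is_linear t).

Lemma fdeltaZ t c v : fdelta t (c *: v) = c *: fdelta t v.
Proof. exact: linearZ. Qed.

Lemma ffun_sum_fdelta z : z = \sum_t fdelta t (z t).
Proof.
apply/ffunP => t; rewrite sum_ffunE (bigD1 t) //= big1 => [|t' /negbTE ntt'].
  by rewrite ffunE eqxx addr0.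
by rewrite ffunE eq_sym ntt'.
Qed.

Definition supported P : {pred {ffun T -> M}} :=
  [pred z : {ffun T -> M} | support z \subset P].

Lemma supportedP P z : reflect (forall t, z t != 0 -> P t) (z \in supported P).
Proof. exact: subsetP. Qed.

Lemma supported_closed P : subsemimod_closed (supported P).
Proof.
split; last first.
  move=> c z /supportedP sz; apply/supportedP => t; rewrite ffunE => czt.
  by apply: sz; apply: contraNneq czt => ->; rewrite scaler0.
split; first by apply/supportedP => t; rewrite ffunE eqxx.
move=> y z /supportedP sy /supportedP sz; apply/supportedP => t; rewrite ffunE.
by case: (eqVneq (y t) 0) => [->|/sy //]; rewrite add0r => /sz.
Qed.

HB.instance Definition _ P :=
  GRing.isSubmodClosed.Build R {ffun T -> M} (supported P) (supported_closed P).

Lemma supported_fdelta P t v : P t -> fdelta t v \in supported P.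
Proof.
move=> Pt; apply/supportedP => t'; rewrite ffunE.
by have [->|] := eqVneq t' t; rewrite ?eqxx.
Qed.

Lemma supported_sub P Q z : z \in supported P -> {subset P <= Q} -> z \in supported Q.
Proof. by move=> /supportedP sz PQ; apply/supportedP => t /sz /PQ. Qed.

Definition restrict P z : {ffun T -> M} := [ffun t => if P t then z t else 0].

Lemma restrict_is_linear P : linear (restrict P).
Proof.
by move=> c y z; apply/ffunP => t; rewrite !ffunE; case: (P t); rewrite ?scaler0 ?addr0.
Qed.

HB.instance Definition _ P :=
  GRing.isLinear.Build R {ffun T -> M} {ffun T -> M} _ (restrict P) (restrict_is_linear P).

Lemma restrict_id P z : z \in supported P -> restrict P z = z.
Proof.
move/supportedP=> sz; apply/ffunP => t; rewrite ffunE; case: ifP => // /negbT nPt.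
by apply/esym/eqP; apply: contraNT nPt; apply: sz.
Qed.

Lemma restrict_supportedC P z : z \in supported (predC P) -> restrict P z = 0.
Proof.
move/supportedP=> sz; apply/ffunP => t; rewrite !ffunE; case: ifP => // Pt.
by apply/eqP; apply: contraTT Pt; apply: sz.
Qed.

End FiniteSupport.

Section Positions.
Variable N : nat.
Implicit Types (u v : 'I_N) (C : {set 'I_N}).

Definition kpos u C : nat := #|[set v in C | (v <= u)%N]|.

Lemma kpos_U1 u v C : v \notin C -> kpos u (v |: C) = (kpos u C + (v <= u))%N.
Proof.
move=> vC; rewrite /kpos; case: leqP => [vu|uv].
  rewrite (_ : [set w in v |: C | _] = v |: [set w in C | (w <= u)%N]).
    by rewrite cardsU1 inE (negbTE vC) addnC.
  by apply/setP => w; rewrite !inE; case: (eqVneq w v) => [->|].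
rewrite addn0; apply: eq_card => w; rewrite !inE.
have [->|_] := eqVneq w v; last by [].
by rewrite (negbTE vC) leqNgt uv.
Qed.

Lemma kpos_swap u0 u C : u \in C -> u0 \notin C ->
  (kpos u0 (u0 |: C) + kpos u (u0 |: C) = (kpos u C + kpos u0 (u0 |: (C :\ u))).+1)%N.
Proof.
move=> uC u0C; have u0u : u0 != u by apply: contraNneq u0C => ->.
have uC' : u \notin u0 |: (C :\ u) by rewrite !inE eqxx eq_sym (negbTE u0u).
rewrite -{1}(setD1K uC) setUCA (kpos_U1 u0 uC') (kpos_U1 u u0C).
have : val u0 != val u by [].
by case: leqP; case: leqP => /= *; lia.
Qed.

End Positions.

Section KoszulHomotopy.
Variables (R : comNzRingType) (n N : nat) (x : 'I_N -> 'I_n).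
Hypothesis x_inj : injective x.
Variable sel : {set 'I_N} -> option 'I_N.
Hypothesis sel_in : forall X u, sel X = Some u -> u \in X.
Hypothesis sel_total : forall X, X != set0 -> sel X != None.

Local Notation poly := {mpoly R[n]}.
Local Notation kchain := {ffun {set 'I_N} -> poly}.
Implicit Types (C : {set 'I_N}) (m : 'X_{1..n}) (s : poly) (z : kchain).

Definition koszul1 C s : kchain :=
  \sum_(u in C) fdelta (C :\ u) ((-1) ^+ kpos u C *: (s * 'X_(x u))).

Lemma koszul1_is_linear C : linear (koszul1 C).
Proof.
move=> c s t; rewrite /koszul1 scaler_sumr -big_split; apply: eq_bigr => u _ /=.
by rewrite mulrDl -scalerAl scalerDr scalerA mulrC -scalerA linearP.
Qed.

HB.instance Definition _ C :=
  GRing.isLinear.Build R poly kchain _ (koszul1 C) (koszul1_is_linear C).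

Definition koszul z : kchain := \sum_C koszul1 C (z C).

Lemma koszul_is_linear : linear koszul.
Proof.
move=> c y z; rewrite /koszul scaler_sumr -big_split /=; apply: eq_bigr => C _ /=.
by rewrite !ffunE linearP.
Qed.

HB.instance Definition _ :=
  GRing.isLinear.Build R kchain kchain _ koszul koszul_is_linear.

(* The active set is unchanged when a variable moves between the monomial and
   the wedge; this is why [homotopy1] is a contracting homotopy. *)
Definition active C m : {set 'I_N} := [set u | (u \in C) || (0 < m (x u))%N].

Definition homotopy1 C m : kchain :=
  if sel (active C m) is Some u then
    if u \in C then 0
    else fdelta (u |: C) ((-1) ^+ kpos u (u |: C) *: 'X_[m - U_(x u)])
  else 0.

Definition homotopy z : kchain := \sum_C mlinext (homotopy1 C) (z C).

Lemma homotopy_is_linear : linear homotopy.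
Proof.
move=> c y z; rewrite /homotopy scaler_sumr -big_split /=; apply: eq_bigr => C _ /=.
by rewrite !ffunE linearP.
Qed.

HB.instance Definition _ :=
  GRing.isLinear.Build R kchain kchain _ homotopy homotopy_is_linear.

Lemma koszul_fdelta C s : koszul (fdelta C s) = koszul1 C s.
Proof.
rewrite /koszul (bigD1 C) //= big1 => [|C' /negbTE nC]; first by rewrite ffunE eqxx addr0.
by rewrite ffunE nC linear0.
Qed.

Lemma homotopy_fdelta C m : homotopy (fdelta C 'X_[m]) = homotopy1 C m.
Proof.
rewrite /homotopy (bigD1 C) //= big1 => [|C' /negbTE nC]; last by rewrite ffunE nC linear0.
by rewrite ffunE eqxx mlinextX addr0.
Qed.

Lemma koszul1X C m :
  koszul1 C 'X_[m] = \sum_(u in C) fdelta (C :\ u) ((-1) ^+ kpos u C *: 'X_[m + U_(x u)]).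
Proof. by apply: eq_bigr => u _; rewrite mpolyXD. Qed.

Lemma homotopy_koszul1X C m : homotopy (koszul1 C 'X_[m]) =
  \sum_(u in C) (-1) ^+ kpos u C *: homotopy1 (C :\ u) (m + U_(x u)).
Proof.
rewrite koszul1X (raddf_sum homotopy) /=; apply: eq_bigr => u _.
by rewrite fdeltaZ [homotopy _]linearZ /= homotopy_fdelta.
Qed.

Lemma active_D1 C m u : u \in C -> active (C :\ u) (m + U_(x u)) = active C m.
Proof.
move=> uC; apply/setP => v; rewrite !inE mnmDE mnm1E (inj_eq x_inj).
by case: (eqVneq u v) => [<-|_]; rewrite ?uC ?addn1 ?addn0 ?orbT.
Qed.

Lemma homotopy1_in C m u : sel (active C m) = Some u -> u \in C -> homotopy1 C m = 0.
Proof. by rewrite /homotopy1 => -> ->. Qed.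

Lemma homotopy1_out C m u : sel (active C m) = Some u -> u \notin C ->
  homotopy1 C m = fdelta (u |: C) ((-1) ^+ kpos u (u |: C) *: 'X_[m - U_(x u)]).
Proof. by rewrite /homotopy1 => -> /negbTE ->. Qed.

Lemma homotopy_koszul1_selected_in C m u : sel (active C m) = Some u -> u \in C ->
  homotopy (koszul1 C 'X_[m]) = fdelta C 'X_[m].
Proof.
move=> su uC; rewrite homotopy_koszul1X (bigD1 u) //= big1 ?addr0 => [|v /andP[vC vu]].
  have su' : sel (active (C :\ u) (m + U_(x u))) = Some u by rewrite active_D1.
  by rewrite (homotopy1_out su') ?setD11 // setD1K // addmK fdeltaZ signrZK.
have sv : sel (active (C :\ v) (m + U_(x v))) = Some u by rewrite active_D1.
by rewrite (homotopy1_in sv) ?scaler0 // in_setD1 eq_sym vu uC.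
Qed.

Lemma koszul_homotopy1_selected_out C m u : sel (active C m) = Some u -> u \notin C ->
  koszul (homotopy1 C m) + homotopy (koszul1 C 'X_[m]) = fdelta C 'X_[m].
Proof.
move=> su uC; have mu : (0 < m (x u))%N by have := sel_in su; rewrite inE (negbTE uC).
have Um : (U_(x u) <= m)%MM by rewrite lep1mP -lt0n.
rewrite (homotopy1_out su uC) homotopy_koszul1X fdeltaZ [koszul _]linearZ /=.
rewrite koszul_fdelta koszul1X.
rewrite (big_setU1 _ uC) /= setU1K // submK // fdeltaZ scalerDr signrZK -addrA.
rewrite scaler_sumr -big_split big1 ?addr0 // => v vC /=.
have uv : u != v by apply: contraNneq uC => ->.
have sv : sel (active (C :\ v) (m + U_(x v))) = Some u by rewrite active_D1.
rewrite (homotopy1_out sv) ?in_setD1 ?(negbTE uC) ?andbF //.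
have -> : (u |: C) :\ v = u |: (C :\ v).
  by apply/setP => w; rewrite !inE; case: (eqVneq w u) => [->|]; rewrite ?uv.
rewrite addmC addmBA // addmC !fdeltaZ !scalerA -scalerDl.
by rewrite -!exprD kpos_swap // exprS mulN1r addNr scale0r.
Qed.

Lemma koszul_homotopy1 C m : C != set0 ->
  koszul (homotopy1 C m) + homotopy (koszul1 C 'X_[m]) = fdelta C 'X_[m].
Proof.
case/set0Pn => u0 u0C; have /sel_total : active C m != set0.
  by apply/set0Pn; exists u0; rewrite inE u0C.
case su: sel => [u|] // _; have [uC|uC] := boolP (u \in C).
  by rewrite (homotopy1_in su uC) linear0 add0r (homotopy_koszul1_selected_in su uC).
exact: koszul_homotopy1_selected_out su uC.
Qed.

Theorem koszul_homotopy z : z \in supported [pred C | C != set0] ->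
  koszul (homotopy z) + homotopy (koszul z) = z.
Proof.
move/supportedP=> sz; rewrite (ffun_sum_fdelta z) (raddf_sum homotopy) (raddf_sum koszul).
rewrite (raddf_sum koszul) (raddf_sum homotopy) -big_split /=; apply: eq_bigr => C _ /=.
have [->|/sz C0] := eqVneq (z C) 0; first by rewrite !linear0 addr0.
rewrite [z C]mpolyE (raddf_sum (fdelta C)) (raddf_sum homotopy) (raddf_sum koszul).
rewrite (raddf_sum koszul) (raddf_sum homotopy) -big_split /=; apply: eq_bigr => m _ /=.
rewrite fdeltaZ [homotopy (_ *: _)]linearZ /= [koszul (_ *: _)]linearZ /=.
rewrite [koszul (_ *: _)]linearZ /= [homotopy (_ *: _)]linearZ /=.
by rewrite -scalerDr homotopy_fdelta koszul_fdelta koszul_homotopy1.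
Qed.

Lemma homotopy1_supported C m :
  homotopy1 C m \in supported
    [pred C' | [exists u, [&& sel (active C m) == Some u, u \notin C & C' == u |: C]]].
Proof.
rewrite /homotopy1; case: sel => [u|]; last exact: rpred0.
have [_|uC] := ifPn; first exact: rpred0.
by apply: supported_fdelta; apply/existsP; exists u; rewrite eqxx uC eqxx.
Qed.

End KoszulHomotopy.

Section Join.
Variable q : nat.
Local Notation lsh := (@lshift q q).
Local Notation rsh := (@rshift q q).
Implicit Types (A B : {set 'I_q}) (K : {set 'I_q} * {set 'I_q}) (C : {set 'I_(q + q)}).

Lemma lshift_rshiftF (i j : 'I_q) : (lsh i == rsh j) = false.
Proof. by apply/negbTE/eqP => /(congr1 val) /=; have := ltn_ord i; lia. Qed.

Lemma rshift_in_lshift_imset A j : (rsh j \in lsh @: A) = false.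
Proof. by apply/negbTE/imsetP => -[i _ /eqP]; rewrite eq_sym lshift_rshiftF. Qed.

Lemma lshift_in_rshift_imset B i : (lsh i \in rsh @: B) = false.
Proof. by apply/negbTE/imsetP => -[j _ /eqP]; rewrite lshift_rshiftF. Qed.

(* With V-indices first, W-indices are shifted by |A| in the wedge; this is the
   sign (-1)^a of the vertical map. *)
Definition join K : {set 'I_(q + q)} := lsh @: K.1 :|: rsh @: K.2.
Definition unjoin C := ([set i | lsh i \in C], [set j | rsh j \in C]).

Lemma mem_join_lshift K i : (lsh i \in join K) = (i \in K.1).
Proof. by rewrite inE (mem_imset _ _ (@lshift_inj q q)) lshift_in_rshift_imset orbF. Qed.

Lemma mem_join_rshift K j : (rsh j \in join K) = (j \in K.2).
Proof. by rewrite inE (mem_imset _ _ (@rshift_inj q q)) rshift_in_lshift_imset. Qed.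

Lemma joinK : cancel join unjoin.
Proof.
by case=> A B; congr pair; apply/setP => i; rewrite inE ?mem_join_lshift ?mem_join_rshift.
Qed.

Lemma unjoinK : cancel unjoin join.
Proof.
move=> C; apply/setP => u.
by case: (split_ordP u) => {}u ->; rewrite ?mem_join_lshift ?mem_join_rshift inE.
Qed.

Lemma join_disjoint K : [disjoint lsh @: K.1 & rsh @: K.2].
Proof.
rewrite -setI_eq0; apply/eqP/setP => u; case: (split_ordP u) => {}u ->.
  by rewrite !inE lshift_in_rshift_imset andbF.
by rewrite !inE rshift_in_lshift_imset.
Qed.

Lemma card_join K : #|join K| = (#|K.1| + #|K.2|)%N.
Proof.
rewrite cardsU (disjoint_setI0 (join_disjoint K)) cards0 subn0.
by rewrite (card_imset _ (@lshift_inj q q)) (card_imset _ (@rshift_inj q q)).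
Qed.

Lemma big_join (V : nmodType) K (F : 'I_(q + q) -> V) :
  \sum_(u in join K) F u = \sum_(i in K.1) F (lsh i) + \sum_(j in K.2) F (rsh j).
Proof.
rewrite (eq_bigl [predU lsh @: K.1 & rsh @: K.2]) => [|u]; last by rewrite !inE.
rewrite bigU ?join_disjoint //.
by rewrite !big_imset //= => ? ? _ _; [apply: rshift_inj | apply: lshift_inj].
Qed.

Lemma join_D1_lshift K i : join (K.1 :\ i, K.2) = join K :\ lsh i.
Proof.
apply/setP => u; case: (split_ordP u) => {}u ->.
all: rewrite in_setD1 ?mem_join_lshift ?mem_join_rshift //=.
  by rewrite in_setD1 (inj_eq (@lshift_inj q q)).
by rewrite eq_sym lshift_rshiftF.
Qed.

Lemma join_D1_rshift K j : join (K.1, K.2 :\ j) = join K :\ rsh j.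
Proof.
apply/setP => u; case: (split_ordP u) => {}u ->.
all: rewrite in_setD1 ?mem_join_lshift ?mem_join_rshift //=.
  by rewrite lshift_rshiftF.
by rewrite in_setD1 (inj_eq (@rshift_inj q q)).
Qed.

Lemma kpos_join_lshift K i : kpos (lsh i) (join K) = kpos i K.1.
Proof.
rewrite /kpos -[RHS]addn0 -(cards0 'I_q) -(card_join ([set m in K.1 | (m <= i)%N], set0)).
apply: eq_card => u; case: (split_ordP u) => {}u ->.
all: rewrite in_set ?mem_join_lshift ?mem_join_rshift /=.
  by rewrite in_set.
by rewrite in_set0 [(_ <= i)%N]leqNgt ltn_addr ?andbF.
Qed.

Lemma kpos_join_rshift K j : kpos (rsh j) (join K) = (#|K.1| + kpos j K.2)%N.
Proof.
rewrite /kpos -(card_join (K.1, [set m in K.2 | (m <= j)%N])).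
apply: eq_card => u; case: (split_ordP u) => {}u ->.
all: rewrite in_set ?mem_join_lshift ?mem_join_rshift /=.
  by have := ltn_ord u; case: (u \in K.1) => //=; lia.
by rewrite in_set leq_add2l.
Qed.

End Join.

Section TotalComplex.
Variables (k : fieldType) (p : nat).
Local Notation q := p.-1.
Local Notation lsh := (@lshift q q).
Local Notation rsh := (@rshift q q).
Local Notation S := (S k p).
Local Notation chain := (chain k p).
Local Notation key := (key p).
Local Notation kchain := {ffun {set 'I_(q + q)} -> S}.
Implicit Types (A B : {set Idx p}) (K : key) (C : {set 'I_(q + q)}) (s : S) (z : chain).

Definition basis_var (u : 'I_(q + q)) : 'I_(2 * p) :=
  match split u with inl i => Ordinal (vidx_lt i) | inr j => Ordinal (widx_lt j) end.

Lemma basis_var_lshift i : 'X_(basis_var (lsh i)) = Xv k i.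
Proof. by rewrite /basis_var (unsplitK (inl _ i)). Qed.

Lemma basis_var_rshift j : 'X_(basis_var (rsh j)) = Xw k j.
Proof. by rewrite /basis_var (unsplitK (inr _ j)). Qed.

Lemma basis_var_inj : injective basis_var.
Proof.
move=> u v; rewrite /basis_var; case: (split_ordP u) => i ->; case: (split_ordP v) => j ->.
all: move=> /(congr1 val) /= e; apply/val_inj => /=.
all: by have := ltn_ord i; have := ltn_ord j; lia.
Qed.

(* Selecting W-indices first makes [hK] keep A when B is nonempty. *)
Definition wsel (X : {set 'I_(q + q)}) : option 'I_(q + q) :=
  if [pick u in X | (q <= u)%N] is Some u then Some u else [pick u in X].

Lemma wsel_in X u : wsel X = Some u -> u \in X.
Proof.
rewrite /wsel; case: pickP => [v /andP[vX _] [<-] //|_].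
by case: pickP => // v vX [<-].
Qed.

Lemma wsel_total X : X != set0 -> wsel X != None.
Proof.
case/set0Pn => v vX; rewrite /wsel; case: pickP => // _.
by case: pickP => // /(_ v); rewrite vX.
Qed.

Lemma wsel_rshift (X : {set 'I_(q + q)}) i j : rsh j \in X -> wsel X != Some (lsh i).
Proof.
move=> jX; rewrite /wsel; case: pickP => [v /andP[_ qv]|/(_ (rsh j))]; last first.
  by rewrite jX /= leq_addr.
by apply: contraL qv => /eqP[->] /=; rewrite -ltnNge.
Qed.

Definition to_kchain z : kchain := [ffun C => z (unjoin C)].
Definition of_kchain (w : kchain) : chain := [ffun K => w (join K)].

Lemma of_kchain_is_linear : linear of_kchain.
Proof. by move=> c v w; apply/ffunP => K; rewrite !ffunE. Qed.

HB.instance Definition _ :=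
  GRing.isLinear.Build k kchain chain _ of_kchain of_kchain_is_linear.

Lemma to_kchainK : cancel to_kchain of_kchain.
Proof. by move=> z; apply/ffunP => K; rewrite !ffunE joinK. Qed.

Lemma of_kchainK : cancel of_kchain to_kchain.
Proof. by move=> w; apply/ffunP => C; rewrite !ffunE unjoinK. Qed.

Lemma of_kchain_fdelta K s : of_kchain (fdelta (join K) s) = single K s.
Proof. by apply/ffunP => K'; rewrite !ffunE (inj_eq (can_inj (@joinK _))). Qed.

Lemma supported_of_kchain (Q : pred key) w :
  (of_kchain w \in supported Q) = (w \in supported [pred C | Q (unjoin C)]).
Proof.
apply/supportedP/supportedP => /= sw C; last by rewrite ffunE => /sw; rewrite joinK.
by move=> wC; apply: sw; rewrite ffunE unjoinK.
Qed.

Definition dK z : chain := of_kchain (koszul basis_var (to_kchain z)).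
Definition hK z : chain := of_kchain (homotopy basis_var wsel (to_kchain z)).

Lemma dK_hK z : z \in supported [pred K : key | K.1 != set0] -> dK (hK z) + hK (dK z) = z.
Proof.
move=> sz; rewrite /dK /hK !of_kchainK -raddfD /= koszul_homotopy ?to_kchainK //.
  exact: basis_var_inj.
- exact: wsel_in.
- exact: wsel_total.
apply/supportedP => C; rewrite ffunE => /(supportedP _ _ sz) /=.
by apply: contraNneq => ->; apply/eqP/setP => i; rewrite !inE.
Qed.

Lemma dK_sum z : dK z = \sum_K of_kchain (koszul1 basis_var (join K) (z K)).
Proof.
rewrite /dK /koszul (raddf_sum of_kchain) (reindex (@join q)) /=; last first.
  by apply: onW_bij; exists (@unjoin q); [exact: joinK | exact: unjoinK].
by apply: eq_bigr => K _; rewrite ffunE joinK.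
Qed.

Lemma singleE K s : single K s = fdelta K s.
Proof. by []. Qed.

Lemma possignE (i : Idx p) A s : possign k i A * s = (-1) ^+ kpos i A *: s.
Proof.
rewrite /possign /kpos; elim: #|_| => [|n IH]; first by rewrite expr0 mul1r scale1r.
by rewrite !exprS !mulN1r mulNr IH scaleNr.
Qed.

Definition dhfull A B s : chain :=
  \sum_(i in A) single (A :\ i, B) (possign k i A * (s * Xv k i)).

Lemma of_koszul1_join A B s : (2 <= #|A|)%N ->
  of_kchain (koszul1 basis_var (join (A, B)) s) = dhfull A B s + dv A B s.
Proof.
move=> A2; rewrite /koszul1 big_join (raddfD of_kchain) /= (raddf_sum of_kchain).
rewrite (raddf_sum of_kchain) /=; congr (_ + _).
  apply: eq_bigr => i _; rewrite -[join _ :\ _](join_D1_lshift (A, B)).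
  by rewrite of_kchain_fdelta kpos_join_lshift basis_var_lshift possignE.
rewrite /dv scaler_sumr; apply: eq_bigr => j _.
rewrite -[join _ :\ _](join_D1_rshift (A, B)) of_kchain_fdelta.
rewrite kpos_join_rshift basis_var_rshift.
rewrite possignE !singleE -fdeltaZ scalerA -exprD /=.
by rewrite -{1}(subnK A2) addnAC exprD sqrrN expr1n mulr1.
Qed.

Definition wide K : bool := (2 <= #|K.1|)%N.

Definition graded (n : int) K : bool := wide K && ((#|K.1| + #|K.2|)%N%:Z == n + 2).

Lemma inFE n z : inF n z <-> z \in supported (graded n).
Proof.
split=> [Fz|/supportedP sz K /sz /andP[w /eqP e]] //.
by apply/supportedP => K /Fz [w e]; rewrite /graded /wide w e eqxx.
Qed.

Lemma dhfull_supported A B s :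
  dhfull A B s \in supported [pred K : key | (K.2 == B) && (#|K.1|.+1 == #|A|)].
Proof.
apply: rpred_sum => i iA; apply: supported_fdelta.
by rewrite /= eqxx (cardsD1 i A) iA eqxx.
Qed.

Lemma dv_supported A B s : dv A B s \in supported [pred K : key | K.1 == A].
Proof. by apply: rpredZ; apply: rpred_sum => j _; apply: supported_fdelta => /=. Qed.

Lemma dh_dv0 A B : dh A B 0 + dv A B 0 = 0 :> chain.
Proof.
rewrite /dh /dv !big1 ?if_same ?scaler0 ?addr0 // => i _.
all: by rewrite mul0r mulr0; apply/ffunP => K; rewrite !ffunE if_same.
Qed.

Lemma dF_dK z : z \in supported wide -> dF z = restrict wide (dK z).
Proof.
move/supportedP=> sz; rewrite dK_sum (raddf_sum (restrict wide)) /dF.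
apply: eq_bigr => -[A B] _ /=; have [->|/sz wA] := eqVneq (z (A, B)) 0.
  by rewrite dh_dv0 !linear0.
rewrite of_koszul1_join // raddfD /= [restrict _ (dv _ _ _)]restrict_id; last first.
  move/supported_sub: (dv_supported A B (z (A, B))); apply=> K /eqP eK.
  by rewrite unfold_in /wide eK.
congr (_ + _); move/supported_sub: (dhfull_supported A B (z (A, B))) => dh_sub.
rewrite /dh; case: ifP => A3.
  by rewrite restrict_id //; apply: dh_sub => K /andP[_ /eqP]; rewrite unfold_in /wide; lia.
rewrite restrict_supportedC //; apply: dh_sub => K /andP[_ /eqP].
by move/negbT: A3; move: wA; rewrite !unfold_in /wide /=; lia.
Qed.

Lemma dK_supported (n : int) z : n != 0 -> z \in supported (graded n) ->
  dK z \in supported [pred K | wide K || (K.2 != set0)].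
Proof.
move=> n0 /supportedP sz; rewrite dK_sum; apply: rpred_sum => -[A B] _.
have [->|/sz /andP[wA /eqP deg]] := eqVneq (z (A, B)) 0; first by rewrite !linear0 rpred0.
rewrite of_koszul1_join //; apply: rpredD.
  move/supported_sub: (dhfull_supported A B (z (A, B))); apply=> K /andP[/eqP K2 /eqP cK].
  rewrite unfold_in /= /wide K2; case: (eqVneq B set0) => [B0|]; rewrite ?orbT // orbF.
  move/eqP: n0; move: deg wA; rewrite /wide /= -cK B0 cards0.
  (* the occurrences of [#|K.1|] differ in their canonical instances *)
  by move: #|K.1| => c; lia.
move/supported_sub: (dv_supported A B (z (A, B))); apply=> K /eqP eK.
by move: wA; rewrite !unfold_in /wide /= eK => ->.
Qed.

Definition hstep K K' : bool :=
  [&& K.1 \subset K'.1, #|K'.1| + #|K'.2| == (#|K.1| + #|K.2|).+1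
    & (K.2 != set0) ==> (K'.1 == K.1)]%N.

Lemma hstep_unjoin C u : u \notin C ->
  ((unjoin C).2 != set0 -> forall i, u != lsh i) -> hstep (unjoin C) (unjoin (u |: C)).
Proof.
move=> uC Wu; apply/and3P; split.
- by apply/subsetP => i; rewrite !inE => ->; rewrite orbT.
- by rewrite -!card_join !unjoinK cardsU1 uC.
apply/implyP => /Wu uV; apply/eqP/setP => i; rewrite !inE eq_sym.
by rewrite (negbTE (uV i)).
Qed.

Lemma hK_supported (P Q : pred key) z : z \in supported P ->
  (forall K K', P K -> hstep K K' -> Q K') -> hK z \in supported Q.
Proof.
move=> /supportedP sz PQ; rewrite supported_of_kchain; apply: rpred_sum => C _.
rewrite ffunE; have [->|/sz PC] := eqVneq (z (unjoin C)) 0; first by rewrite linear0 rpred0.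
apply: rpred_mlinext => m.
move/supported_sub: (homotopy1_supported k basis_var wsel C m); apply=> C'.
case/existsP => u /and3P[/eqP su uC /eqP ->]; rewrite unfold_in /=.
apply: (PQ _ _ PC); apply: hstep_unjoin => // /set0Pn[j]; rewrite inE => jC i.
by apply: contra_eqN su => /eqP ->; apply: (@wsel_rshift _ i j); rewrite inE jC.
Qed.

Lemma hK_graded n z : z \in supported (graded n) -> hK z \in supported (graded (n + 1)).
Proof.
move/hK_supported; apply=> K K' /andP[wK /eqP deg] /and3P[sub /eqP cK _].
move: wK deg cK (subset_leq_card sub); rewrite /graded /wide => *.
by apply/andP; split; [lia | apply/eqP; lia].
Qed.

Definition narrow K : bool := ~~ wide K && (K.2 != set0).

Lemma hK_narrow z : z \in supported narrow -> hK z \in supported (predC wide).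
Proof.
move/hK_supported; apply=> K K' /andP[nwK B0] /and3P[_ _].
by rewrite B0 => /eqP eK; rewrite /= /wide eK; exact: nwK.
Qed.

Lemma dK_narrow n z : n != 0 -> z \in supported (graded n) ->
  restrict wide (dK z) = 0 -> dK z \in supported narrow.
Proof.
move=> n0 Fz dz0; apply/supportedP => K DzK; have nwK : ~~ wide K.
  by apply: contra DzK => wK; have /ffunP/(_ K) := dz0; rewrite !ffunE wK => ->.
by move/supportedP: (dK_supported n0 Fz) => /(_ K DzK) /=; rewrite /narrow nwK (negbTE nwK).
Qed.

Lemma graded_wide n z : z \in supported (graded n) -> z \in supported wide.
Proof. by move/supported_sub; apply=> K /andP[]. Qed.

Lemma wide_nonempty z :
  z \in supported wide -> z \in supported [pred K : key | K.1 != set0].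
Proof. by move/supported_sub; apply=> K; rewrite unfold_in inE -card_gt0; apply: ltnW. Qed.

End TotalComplex.

Theorem proposition7p6 (k : fieldType) (p : nat) (hp : (3 <= p)%N)
  (i : int) (hi : i != 0) (x : chain k p) :
  inF i x -> dF x = 0 -> exists2 y : chain k p, inF (i + 1) y & dF y = x.
Proof.
move=> /inFE Fx; have Wx := graded_wide Fx; rewrite (dF_dK Wx) => dx0.
have Fy := hK_graded Fx; exists (hK x); first exact/inFE.
rewrite (dF_dK (graded_wide Fy)).
have /(canRL (addrK _)) -> := dK_hK (wide_nonempty Wx).
rewrite raddfB /= restrict_id // restrict_supportedC ?subr0 //.
exact/hK_narrow/(dK_narrow hi Fx).
Qed.
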